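(* Assume Conditions A and B, and suppose $a$ and $b$ are natural boundaries. Let $c_0(a),c_0(b)\in[0,\infty]$ be the boundary limits of $c_0$. Then $\lim_{y\to a}\frac{g_0(z)-g_0(y)}{\zeta(z)-\zeta(y)}=c_0(a)$ for all $z\in\mathcal I$; $\lim_{z\to b}\frac{g_0(z)-g_0(y)}{\zeta(z)-\zeta(y)}=c_0(b)$ for all $y\in\mathcal I$; $\lim_{(y,z)\to(a,a),\,y<z}\frac{g_0(z)-g_0(y)}{\zeta(z)-\zeta(y)}=c_0(a)$ and $\lim_{(y,z)\to(b,b),\,y<z}\frac{g_0(z)-g_0(y)}{\zeta(z)-\zeta(y)}=c_0(b)$; $\lim_{y\to a}g_0(y)/\zeta(y)=c_0(a)$ and $\lim_{z\to b}g_0(z)/\zeta(z)=c_0(b)$. In particular $\lim_{y\to a}g_0(y)=-\infty$ when $c_0(a)>0$ and $\lim_{z\to b}g_0(z)=\infty$ when $c_0(b)>0$.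
   Context: Setting. Let $\mathcal I=(a,b)$ with $-\infty\le a<b\le\infty$, let $\mu,\sigma:\mathcal I\to\mathbb R$ be continuous with $\sigma(x)\neq0$ on $\mathcal I$, and let $X_0$ be the regular diffusion $dX_0(t)=\mu(X_0(t))\,dt+\sigma(X_0(t))\,dW(t)$, $X_0(0)=x_0\in\mathcal I$. Scale density $s(x)=\exp(-\int^x 2\mu/\sigma^2)$, scale function $S(x)=\int^x s$, scale measure $S[y,z]=S(z)-S(y)$ ($dS$), speed density $m=1/(\sigma^2 s)$, speed measure $M[y,z]=\int_y^z m$ ($dM$). Boundaries are classified in Feller's sense; $a$ is attainable iff regular or exit. Condition A: $S(a,x]<\infty$ for $x\in\mathcal I$ and $S[x,b)=\infty$ (so $a$ is regular, exit or natural, $b$ is natural or entrance); if $a$ is reflecting then $\lim_{x\to a}s(x)M[x,b)<\infty$; if $b$ is natural then $M[y,b)<\infty$ for $y\in\mathcal I$; infinite boundaries are natural. State space $\mathcal E$: $\mathcal I$ with $a$ added if $a$ is attainable and $b$ added if $b$ is entrance. Condition B: (a) $c_0:\mathcal E\to[0,\infty)$ is continuous; if $a$ (resp. $b$) is natural, $c_0(a):=\lim_{x\to a}c_0(x)$ (resp. $c_0(b):=\lim_{x\to b}c_0(x)$) exists in $[0,\infty]$, with $c_0(-\infty)=\infty$ if $a=-\infty$ and $c_0(\infty)=\infty$ if $b=\infty$; $\int_y^b c_0\,dM<\infty$ for every $y\in\mathcal I$; if $a$ is reflecting, $\lim_{x\to a}s(x)\int_x^b c_0\,dM<\infty$. (b)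 with $\overline{\mathcal R}=\{(y,z)\in\mathcal E^2:y\le z\}$, $c_1:\overline{\mathcal R}\to[0,\infty]$ is continuous with $c_1\ge k_1$ for a constant $k_1>0$; for each $z\in\mathcal E\setminus\{a\}$, $c_1(\cdot,z)$ is continuously differentiable near $a$, and for each $y\in\mathcal E\setminus\{b\}$, $c_1(y,\cdot)$ is continuously differentiable near $b$. Functions: $g_0(x)=\int_{x_0}^x\int_u^b 2c_0(v)\,dM(v)\,dS(u)$ and $\zeta(x)=\int_{x_0}^x 2M[u,b)\,dS(u)$ for $x\in\mathcal I$. *)

From Stdlib Require Import Reals Lra ClassicalEpsilon.
Open Scope R_scope.

(* Extended reals, used for possibly infinite endpoints a, b and for
   boundary values c0(a), c0(b) in [0, +oo]. *)
Inductive Rbar : Type := Finite (r : R) | p_infty | m_infty.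

Definition Rbar_lt (x y : Rbar) : Prop :=
  match x, y with
  | Finite a, Finite b => a < b
  | m_infty, Finite _ | m_infty, p_infty | Finite _, p_infty => True
  | _, _ => False
  end.

Definition Rbar_pos (x : Rbar) : Prop :=
  match x with Finite r => 0 < r | p_infty => True | m_infty => False end.

Definition Rbar_nonneg (x : Rbar) : Prop :=
  match x with Finite r => 0 <= r | p_infty => True | m_infty => False end.

Definition inI (a b : Rbar) (x : R) : Prop := Rbar_lt a (Finite x) /\ Rbar_lt (Finite x) b.

Definition Rbar_nbhd (L : Rbar) (P : R -> Prop) : Prop :=
  match L with
  | Finite l => exists eps, 0 < eps /\ forall v, Rabs (v - l) < eps -> P v
  | p_infty => exists M, forall v, M < v -> P v
  | m_infty => exists M, forall v, v < M -> P v
  end.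

Definition lim_left (a : Rbar) (f : R -> R) (L : Rbar) : Prop :=
  forall P, Rbar_nbhd L P ->
    exists c, Rbar_lt a (Finite c) /\
      forall y, Rbar_lt a (Finite y) -> y < c -> P (f y).

Definition lim_right (b : Rbar) (f : R -> R) (L : Rbar) : Prop :=
  forall P, Rbar_nbhd L P ->
    exists c, Rbar_lt (Finite c) b /\
      forall z, c < z -> Rbar_lt (Finite z) b -> P (f z).

Definition lim_left2 (a : Rbar) (F : R -> R -> R) (L : Rbar) : Prop :=
  forall P, Rbar_nbhd L P ->
    exists c, Rbar_lt a (Finite c) /\
      forall y z, Rbar_lt a (Finite y) -> y < z -> z < c -> P (F y z).

Definition lim_right2 (b : Rbar) (F : R -> R -> R) (L : Rbar) : Prop :=
  forall P, Rbar_nbhd L P ->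
    exists c, Rbar_lt (Finite c) b /\
      forall y z, c < y -> y < z -> Rbar_lt (Finite z) b -> P (F y z).

(* The (Stdlib) Riemann integral  int_u^v f  (0 if f is not Riemann integrable;
   RiemannInt is independent of the integrability proof). *)
Definition RI (f : R -> R) (u v : R) : R :=
  epsilon (inhabits 0)
    (fun I => exists pr : Riemann_integrable f u v, RiemannInt pr = I).

Definition LimR (b : Rbar) (f : R -> R) : R :=
  epsilon (inhabits 0) (fun L => lim_right b f (Finite L)).

Section Diffusion.
Variables (mu sigma : R -> R) (x0 : R).

Definition sdens (x : R) : R :=
  exp (- RI (fun t => 2 * mu t / (sigma t) ^ 2) x0 x).

Definition mdens (x : R) : R := 1 / ((sigma x) ^ 2 * sdens x).

(* Feller's classification: a natural boundary (both the integrals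
   Sigma(a) = int_a^x S[eta,x] dM(eta) and N(a) = int_a^x M[eta,x] dS(eta)
   are infinite), and similarly at b. *)
Definition natural_left (a b : Rbar) : Prop :=
  forall x, inI a b x ->
    lim_left a (fun u => RI (fun eta => RI sdens eta x * mdens eta) u x) p_infty /\
    lim_left a (fun u => RI (fun eta => RI mdens eta x * sdens eta) u x) p_infty.

Definition natural_right (a b : Rbar) : Prop :=
  forall x, inI a b x ->
    lim_right b (fun v => RI (fun eta => RI sdens x eta * mdens eta) x v) p_infty /\
    lim_right b (fun v => RI (fun eta => RI mdens x eta * sdens eta) x v) p_infty.

Definition g0 (b : Rbar) (c0 : R -> R) (x : R) : R :=
  RI (fun u => LimR b (fun v => RI (fun t => 2 * c0 t * mdens t) u v) * sdens u) x0 x.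

Definition zeta (b : Rbar) (x : R) : R :=
  RI (fun u => 2 * LimR b (fun v => RI mdens u v) * sdens u) x0 x.

End Diffusion.

From Coquelicot Require Import Coquelicot.
From Stdlib Require Import Reals Lra ClassicalEpsilon.
Open Scope R_scope.

(* With C(u) = ∫_u^b c0 dM and M(u) = M[u,b), the functions g0 and ζ are primitives of
   f = 2 C s and h = 2 M s, so f/h = C/M.  Near b, C(u)/M(u) is an m-weighted average of c0
   over (u, b) and tends to c0(b); near a, M(u) → ∞ because a is natural while S(a,x] is
   finite, and L'Hôpital's rule gives C/M → c0(a).  As a and b are natural, ∫ h diverges at
   both ends.  Every quotient of increments of g0 and ζ is an h-weighted average of f/h, so
   L'Hôpital's rule in its ∞/∞ form yields all the limits; the last two follow from
   g0/ζ → c0 and ζ → ∓∞. *)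

Global Instance Rbar_nbhd_filter (L : Rbar) : Filter (Rbar_nbhd L).
Proof.
  constructor; destruct L as [l| |]; simpl.
  - exists 1; split; [lra | auto].
  - exists 0; auto.
  - exists 0; auto.
  - intros P Q [e1 [He1 HP]] [e2 [He2 HQ]].
    exists (Rmin e1 e2); split; [now apply Rmin_pos |].
    intros v Hv; split; [apply HP | apply HQ];
      eapply Rlt_le_trans; eauto; [apply Rmin_l | apply Rmin_r].
  - intros P Q [M1 HP] [M2 HQ]; exists (Rmax M1 M2); intros v Hv; split;
      [apply HP | apply HQ]; eapply Rle_lt_trans; eauto; [apply Rmax_l | apply Rmax_r].
  - intros P Q [M1 HP] [M2 HQ]; exists (Rmin M1 M2); intros v Hv; split;
      [apply HP | apply HQ]; eapply Rlt_le_trans; eauto; [apply Rmin_l | apply Rmin_r].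
  - intros P Q HPQ [e [He HP]]; exists e; auto.
  - intros P Q HPQ [M HP]; exists M; auto.
  - intros P Q HPQ [M HP]; exists M; auto.
Qed.

Definition Rbar_le_fin (v : R) (hi : Rbar) : Prop :=
  match hi with Finite r => v <= r | p_infty => True | m_infty => False end.

Definition band (lo : R) (hi : Rbar) (v : R) : Prop := lo <= v /\ Rbar_le_fin v hi.

Lemma mediant_near l e A B F H :
  0 < e -> 2 / e * (Rabs (A - l * B) + e * Rabs B) + Rabs B < H ->
  l - e / 2 <= F / H <= l + e / 2 -> Rabs ((A + F) / (B + H) - l) < e.
Proof.
  intros He HW HF.
  set (Q := Rabs (A - l * B) + e * Rabs B) in HW.
  assert (HB : - Rabs B <= B <= Rabs B) by (apply Rabs_le_between; lra).
  assert (HAB : - Rabs (A - l * B) <= A - l * B <= Rabs (A - l * B))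
    by (apply Rabs_le_between; lra).
  assert (HQ : Q < e / 2 * H).
  { assert (E : e / 2 * (2 / e * Q) = Q) by (field; lra).
    rewrite <- E; apply Rmult_lt_compat_l; [lra |].
    generalize (Rabs_pos B); lra. }
  assert (HQ0 : 0 <= Q) by (unfold Q; generalize (Rabs_pos (A - l * B)) (Rabs_pos B); nra).
  assert (HH : 0 < H) by nra.
  assert (HF1 : (l - e / 2) * H <= F).
  { replace F with (F / H * H) by (field; lra); apply Rmult_le_compat_r; lra. }
  assert (HF2 : F <= (l + e / 2) * H).
  { replace F with (F / H * H) by (field; lra); apply Rmult_le_compat_r; lra. }
  assert (HeB : - (e * Rabs B) <= e * B <= e * Rabs B) by (split; nra).
  assert (HBH : 0 < B + H) by (unfold Q in HQ; nra).
  replace ((A + F) / (B + H) - l) with ((A + F - l * (B + H)) / (B + H)) by (field; lra).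
  unfold Rdiv; rewrite Rabs_mult, Rabs_inv, (Rabs_pos_eq (B + H)) by lra.
  apply (Rmult_lt_reg_r (B + H)); [lra |].
  rewrite Rmult_assoc, Rinv_l, Rmult_1_r by lra.
  apply Rabs_def1; unfold Q in HQ; lra.
Qed.

Lemma mediant_large K A B F H :
  Rabs (K * B - A) + Rabs B < H -> Rabs K + 1 <= F / H -> K < (A + F) / (B + H).
Proof.
  intros HW HF.
  assert (HB : - Rabs B <= B <= Rabs B) by (apply Rabs_le_between; lra).
  assert (HKA : - Rabs (K * B - A) <= K * B - A <= Rabs (K * B - A))
    by (apply Rabs_le_between; lra).
  assert (HK := Rle_abs K).
  assert (HH : 0 < H) by (generalize (Rabs_pos (K * B - A)); lra).
  assert (EF : F = F / H * H) by (field; lra).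
  apply (Rmult_lt_reg_r (B + H)); [lra |].
  unfold Rdiv; rewrite Rmult_assoc, Rinv_l, Rmult_1_r by lra.
  nra.
Qed.

(* The third clause: a fixed perturbation (A, B) of F/H is swamped once H is large. *)
Lemma nbhd_band L P : Rbar_nonneg L -> Rbar_nbhd L P ->
  exists lo hi, Rbar_nbhd L (band lo hi) /\ (forall v, band lo hi v -> P v) /\
    forall A B, exists W, forall F H, W < H -> band lo hi (F / H) -> P ((A + F) / (B + H)).
Proof.
  destruct L as [l| |]; simpl; [intros _ [e [He HP]] | intros _ [K HP] | contradiction].
  - exists (l - e / 2), (Finite (l + e / 2)); split; [|split].
    + exists (e / 2); split; [lra |].
      intros v Hv; apply Rabs_def2 in Hv; split; simpl; lra.
    + intros v [H1 H2]; apply HP, Rabs_def1; simpl in H2; lra.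
    + intros A B; exists (2 / e * (Rabs (A - l * B) + e * Rabs B) + Rabs B).
      intros F H HW [H1 H2]; apply HP, mediant_near; auto.
  - exists (Rabs K + 1), p_infty; split; [|split].
    + exists (Rabs K + 1); intros v Hv; split; simpl; auto; lra.
    + intros v [H1 _]; apply HP; generalize (Rle_abs K); lra.
    + intros A B; exists (Rabs (K * B - A) + Rabs B).
      intros F H HW [H1 _]; apply HP, mediant_large; auto.
Qed.

Lemma Rbar_nbhd_locally l P : Rbar_nbhd (Finite l) P <-> locally l P.
Proof.
  split.
  - intros [e [He HP]]; exists (mkposreal e He); intros v Hv; apply HP, Hv.
  - intros [e HP]; exists e; split; [apply cond_pos |]; intros v Hv; apply HP, Hv.
Qed.

Section NbhdLimits.
Context {T : Type} {F : (T -> Prop) -> Prop} {FF : ProperFilter F}.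

Lemma filterlim_nbhd_const (c : R) : filterlim (fun _ => c) F (Rbar_nbhd (Finite c)).
Proof.
  intros P [e [He HP]]; apply (filter_forall (F := F)); intros; apply HP.
  rewrite Rminus_diag, Rabs_R0; lra.
Qed.

Lemma filterlim_nbhd_le (f g : T -> R) lf lg :
  filterlim f F (Rbar_nbhd (Finite lf)) -> filterlim g F (Rbar_nbhd (Finite lg)) ->
  F (fun t => f t <= g t) -> lf <= lg.
Proof.
  intros Hf Hg Hfg; apply Rnot_lt_le; intros Hlt.
  set (e := (lf - lg) / 2).
  assert (He : 0 < e) by (unfold e; lra).
  assert (Nf : Rbar_nbhd (Finite lf) (fun v => Rabs (v - lf) < e)) by (exists e; auto).
  assert (Ng : Rbar_nbhd (Finite lg) (fun v => Rabs (v - lg) < e)) by (exists e; auto).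
  specialize (Hf _ Nf); specialize (Hg _ Ng); unfold filtermap in Hf, Hg.
  destruct (filter_ex _ (filter_and _ _ Hfg (filter_and _ _ Hf Hg))) as [t [Ht [Htf Htg]]].
  apply Rabs_def2 in Htf; apply Rabs_def2 in Htg; unfold e in *; lra.
Qed.

Lemma filterlim_nbhd_unique (f : T -> R) l1 l2 :
  filterlim f F (Rbar_nbhd (Finite l1)) -> filterlim f F (Rbar_nbhd (Finite l2)) -> l1 = l2.
Proof.
  intros H1 H2; apply Rle_antisym;
    [apply (filterlim_nbhd_le f f) | apply (filterlim_nbhd_le f f)]; auto;
    apply filter_forall; intros; lra.
Qed.

Lemma filterlim_nbhd_affine (f g : T -> R) l al be :
  filterlim f F (Rbar_nbhd (Finite l)) -> F (fun t => g t = al * f t + be) ->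
  filterlim g F (Rbar_nbhd (Finite (al * l + be))).
Proof.
  intros Hf Hg P [e [He HP]].
  set (d := e / (Rabs al + 1)).
  assert (Hal : 0 < Rabs al + 1) by (generalize (Rabs_pos al); lra).
  assert (Hd : 0 < d) by (unfold d; apply Rdiv_lt_0_compat; lra).
  assert (Nf : Rbar_nbhd (Finite l) (fun v => Rabs (v - l) < d)) by (exists d; auto).
  specialize (Hf _ Nf); unfold filtermap in Hf |- *.
  generalize (filter_and _ _ Hg Hf); apply filter_imp; intros t [E Ht]; apply HP.
  rewrite E; replace (al * f t + be - (al * l + be)) with (al * (f t - l)) by ring.
  rewrite Rabs_mult; apply Rle_lt_trans with (Rabs al * d).
  - apply Rmult_le_compat_l; [apply Rabs_pos | lra].
  - unfold d; apply (Rmult_lt_reg_r (Rabs al + 1)); auto; field_simplify; lra.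
Qed.

Lemma filterlim_pinfty_le (f g : T -> R) k :
  filterlim f F (Rbar_nbhd p_infty) -> 0 < k -> F (fun t => f t <= k * g t) ->
  filterlim g F (Rbar_nbhd p_infty).
Proof.
  intros Hf Hk Hfg P [M HP].
  assert (N : Rbar_nbhd p_infty (fun v => k * M < v)) by (exists (k * M); auto).
  specialize (Hf _ N); unfold filtermap in Hf |- *.
  generalize (filter_and _ _ Hfg Hf); apply filter_imp; intros t [H1 H2].
  apply HP, (Rmult_lt_reg_l k); lra.
Qed.

Lemma filterlim_pinfty_ratio (u v : T -> R) L :
  Rbar_pos L -> filterlim (fun t => u t / v t) F (Rbar_nbhd L) ->
  filterlim v F (Rbar_nbhd p_infty) -> filterlim u F (Rbar_nbhd p_infty).
Proof.
  intros HL Huv Hv.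
  assert (Hd : exists d, 0 < d /\ Rbar_nbhd L (fun w => d < w)).
  { destruct L as [l| |]; simpl in HL; [| | contradiction].
    - exists (l / 2); split; [lra |]; exists (l / 2); split; [lra |].
      intros w Hw; apply Rabs_def2 in Hw; lra.
    - exists 1; split; [lra |]; exists 1; auto. }
  destruct Hd as [d [Hd Nd]].
  apply (filterlim_pinfty_le v u (/ d) Hv); [now apply Rinv_0_lt_compat |].
  assert (N0 : Rbar_nbhd p_infty (fun w => 0 < w)) by (exists 0; auto).
  specialize (Huv _ Nd); specialize (Hv _ N0); unfold filtermap in Huv, Hv.
  generalize (filter_and _ _ Huv Hv); apply filter_imp; intros t [H1 H2].
  assert (E : u t = u t / v t * v t) by (field; lra).
  rewrite E; apply (Rmult_le_reg_l d); [lra |].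
  field_simplify; [nra | lra].
Qed.

Lemma filterlim_m_infty_opp (u : T -> R) :
  filterlim (fun t => - u t) F (Rbar_nbhd p_infty) -> filterlim u F (Rbar_nbhd m_infty).
Proof.
  intros H P [M HP].
  assert (N : Rbar_nbhd p_infty (fun v => - M < v)) by (exists (- M); auto).
  specialize (H _ N); unfold filtermap in H |- *.
  generalize H; apply filter_imp; intros t Ht; apply HP; lra.
Qed.

Lemma filterlim_nbhd_div (f g : T -> R) lf lg :
  filterlim f F (Rbar_nbhd (Finite lf)) -> filterlim g F (Rbar_nbhd (Finite lg)) -> lg <> 0 ->
  filterlim (fun t => f t / g t) F (Rbar_nbhd (Finite (lf / lg))).
Proof.
  intros Hf Hg Hlg P HP; apply Rbar_nbhd_locally in HP.
  assert (Hf' : filterlim f F (locally lf)) by (intros Q HQ; apply Hf, Rbar_nbhd_locally, HQ).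
  assert (Hg' : filterlim g F (locally lg)) by (intros Q HQ; apply Hg, Rbar_nbhd_locally, HQ).
  assert (Hinv : filterlim (fun t => / g t) F (locally (/ lg)))
    by (eapply filterlim_comp; [exact Hg' | apply continuous_Rinv, Hlg]).
  exact (filterlim_comp_2 f (fun t => / g t) mult Hf' Hinv (filterlim_mult lf (/ lg)) P HP).
Qed.

Lemma filterlim_nbhd_band (r : T -> R) l lo hi :
  filterlim r F (Rbar_nbhd (Finite l)) -> F (fun t => band lo hi (r t)) -> band lo hi l.
Proof.
  intros Hr Hb; split.
  - apply (filterlim_nbhd_le (fun _ => lo) r); auto using filterlim_nbhd_const.
    generalize Hb; apply filter_imp; intros t [H _]; exact H.
  - destruct hi as [h| |]; simpl; auto.
    + apply (filterlim_nbhd_le r (fun _ => h)); auto using filterlim_nbhd_const.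
      generalize Hb; apply filter_imp; intros t [_ H]; exact H.
    + destruct (filter_ex _ Hb) as [t [_ []]].
Qed.

End NbhdLimits.

Lemma RI_RInt f u v : ex_RInt f u v -> RI f u v = RInt f u v.
Proof.
  intros H; pose proof (ex_RInt_Reals_0 f u v H) as pr; unfold RI.
  destruct (epsilon_spec (inhabits 0)
    (fun r => exists pr : Riemann_integrable f u v, RiemannInt pr = r)
    (ex_intro _ (RiemannInt pr) (ex_intro _ pr eq_refl))) as [pr' <-].
  symmetry; apply RInt_Reals.
Qed.

Lemma Rbar_lt_fin_le a y z : Rbar_lt a (Finite y) -> y <= z -> Rbar_lt a (Finite z).
Proof. destruct a; simpl; auto; lra. Qed.

Lemma Rbar_fin_lt_le b y z : Rbar_lt (Finite z) b -> y <= z -> Rbar_lt (Finite y) b.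
Proof. destruct b; simpl; auto; lra. Qed.

Lemma Rbar_lt_fin_below a y : Rbar_lt a (Finite y) -> exists z, z < y /\ Rbar_lt a (Finite z).
Proof.
  destruct a as [r| |]; simpl; intros H; [exists ((r + y) / 2) | contradiction | exists (y - 1)];
    split; auto; lra.
Qed.

Lemma Rbar_fin_lt_above b y : Rbar_lt (Finite y) b -> exists z, y < z /\ Rbar_lt (Finite z) b.
Proof.
  destruct b as [r| |]; simpl; intros H; [exists ((r + y) / 2) | exists (y + 1) | contradiction];
    split; auto; lra.
Qed.

Lemma inI_between a b y z t : inI a b y -> inI a b z -> y <= t <= z -> inI a b t.
Proof.
  intros [Hy _] [_ Hz] Ht; split; [apply (Rbar_lt_fin_le a y) | apply (Rbar_fin_lt_le b t z)];
    auto; lra.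
Qed.

(* [lim_left a f L] is by definition [filterlim f (left_end a) (Rbar_nbhd L)]. *)
Definition left_end (a : Rbar) (P : R -> Prop) : Prop :=
  exists c, Rbar_lt a (Finite c) /\ forall y, Rbar_lt a (Finite y) -> y < c -> P y.

Definition right_end (b : Rbar) (P : R -> Prop) : Prop :=
  exists c, Rbar_lt (Finite c) b /\ forall z, c < z -> Rbar_lt (Finite z) b -> P z.

Section Interval.
Variables (a b : Rbar) (x0 : R).
Hypothesis Hx0 : inI a b x0.
Local Notation I := (inI a b).

Local Instance left_end_proper : ProperFilter (left_end a).
Proof.
  constructor; [|constructor].
  - intros P [c [Hc HP]]; destruct (Rbar_lt_fin_below a c Hc) as [y [Hy Ha]]; exists y; auto.
  - exists x0; split; [apply Hx0 | auto].
  - intros P Q [c1 [H1 HP]] [c2 [H2 HQ]]; exists (Rmin c1 c2); split.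
    + unfold Rmin; destruct Rle_dec; auto.
    + intros y Hy Hyc; split; [apply HP | apply HQ]; auto;
        eapply Rlt_le_trans; eauto; [apply Rmin_l | apply Rmin_r].
  - intros P Q HPQ [c [Hc HP]]; exists c; auto.
Qed.

Local Instance right_end_proper : ProperFilter (right_end b).
Proof.
  constructor; [|constructor].
  - intros P [c [Hc HP]]; destruct (Rbar_fin_lt_above b c Hc) as [z [Hz Hb]]; exists z; auto.
  - exists x0; split; [apply Hx0 | auto].
  - intros P Q [c1 [H1 HP]] [c2 [H2 HQ]]; exists (Rmax c1 c2); split.
    + unfold Rmax; destruct Rle_dec; auto.
    + intros z Hcz Hz; split; [apply HP | apply HQ]; auto;
        eapply Rle_lt_trans; eauto; [apply Rmax_l | apply Rmax_r].
  - intros P Q HPQ [c [Hc HP]]; exists c; auto.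
Qed.

Lemma left_end_lt c : Rbar_lt a (Finite c) -> left_end a (fun y => y < c).
Proof. intros Hc; exists c; auto. Qed.

Lemma right_end_gt c : Rbar_lt (Finite c) b -> right_end b (fun z => c < z).
Proof. intros Hc; exists c; auto. Qed.

Lemma left_end_inI : left_end a I.
Proof.
  exists x0; split; [apply Hx0 |]; intros y Hy Hyx; split; auto.
  apply (Rbar_fin_lt_le b y x0); [apply Hx0 | lra].
Qed.

Lemma right_end_inI : right_end b I.
Proof.
  exists x0; split; [apply Hx0 |]; intros z Hxz Hz; split; auto.
  apply (Rbar_lt_fin_le a x0 z); [apply Hx0 | lra].
Qed.

Lemma LimR_eq f l : lim_right b f (Finite l) -> LimR b f = l.
Proof.
  intros H; unfold LimR.
  apply (filterlim_nbhd_unique (F := right_end b) f); auto.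
  apply (epsilon_spec (inhabits 0) (fun l => lim_right b f (Finite l)) (ex_intro _ l H)).
Qed.

Lemma inI_locally x : I x -> locally x I.
Proof.
  intros [H1 H2].
  destruct (Rbar_lt_fin_below a x H1) as [l [Hl Hl']].
  destruct (Rbar_fin_lt_above b x H2) as [r [Hr Hr']].
  apply (locally_open (fun t => l < t /\ t < r)).
  - apply open_and; [apply open_gt | apply open_lt].
  - intros t Ht; apply (inI_between a b l r); [split | split | lra]; auto.
    + apply (Rbar_fin_lt_le b l x); auto; lra.
    + apply (Rbar_lt_fin_le a x r); auto; lra.
  - split; auto.
Qed.

Definition contI (f : R -> R) : Prop := forall x, I x -> continuous f x.

Lemma contI_scal f k : contI f -> contI (fun x => k * f x).
Proof. intros H x Hx; apply (continuous_mult (fun _ => k) f); [apply continuous_const | auto]. Qed.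

Lemma contI_mult f g : contI f -> contI g -> contI (fun x => f x * g x).
Proof. intros Hf Hg x Hx; apply (continuous_mult f g); auto. Qed.

Lemma ex_RInt_I f u v : contI f -> I u -> I v -> ex_RInt f u v.
Proof.
  intros Hf Hu Hv; apply (@ex_RInt_continuous R_CompleteNormedModule); intros t Ht.
  apply Hf, (inI_between a b (Rmin u v) (Rmax u v)); auto;
    unfold Rmin, Rmax; destruct Rle_dec; auto.
Qed.

Lemma RI_RInt_I f u v : contI f -> I u -> I v -> RI f u v = RInt f u v.
Proof. intros; apply RI_RInt, ex_RInt_I; auto. Qed.

Lemma RInt_Chasles_I f u v w : contI f -> I u -> I v -> I w ->
  RInt f u v + RInt f v w = RInt f u w.
Proof. intros; apply (@RInt_Chasles R_CompleteNormedModule); apply ex_RInt_I; auto. Qed.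

Lemma RInt_swap_I f u v : contI f -> I u -> I v -> RInt f v u = - RInt f u v.
Proof. intros; symmetry; apply (@opp_RInt_swap R_CompleteNormedModule), ex_RInt_I; auto. Qed.

Lemma RInt_scal_I f k u v : contI f -> I u -> I v ->
  RInt (fun x => k * f x) u v = k * RInt f u v.
Proof. intros; apply (@RInt_scal R_CompleteNormedModule), ex_RInt_I; auto. Qed.

Lemma RInt_le_I f g u v : contI f -> contI g -> I u -> I v -> u <= v ->
  (forall x, u < x < v -> f x <= g x) -> RInt f u v <= RInt g u v.
Proof. intros; apply RInt_le; auto; apply ex_RInt_I; auto. Qed.

Lemma RInt_ge0_I f u v : contI f -> I u -> I v -> u <= v ->
  (forall x, u < x < v -> 0 <= f x) -> 0 <= RInt f u v.
Proof. intros; apply RInt_ge_0; auto; apply ex_RInt_I; auto. Qed.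

Lemma RInt_gt0_I f u v : contI f -> I u -> I v -> u < v ->
  (forall x, u < x < v -> 0 < f x) -> 0 < RInt f u v.
Proof.
  intros Hf Hu Hv Huv H; apply RInt_gt_0; auto; intros x Hx.
  apply Hf, (inI_between a b u v); auto.
Qed.

Lemma is_derive_RInt_I f w t : contI f -> I w -> I t -> is_derive (fun v => RInt f w v) t (f t).
Proof.
  intros Hf Hw Ht; apply (is_derive_RInt f _ w t); [| apply Hf; auto].
  generalize (inI_locally t Ht); apply filter_imp; intros v Hv.
  apply (@RInt_correct R_CompleteNormedModule), ex_RInt_I; auto.
Qed.

Lemma contI_RI_r f w : contI f -> I w -> contI (fun v => RI f w v).
Proof.
  intros Hf Hw t Ht; apply (continuous_ext_loc _ (fun v => RInt f w v)).
  - generalize (inI_locally t Ht); apply filter_imp; intros v Hv; symmetry; apply RI_RInt_I; auto.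
  - apply (@ex_derive_continuous R_AbsRing R_NormedModule); eexists; apply is_derive_RInt_I; auto.
Qed.

Lemma contI_RI_l f w : contI f -> I w -> contI (fun v => RI f v w).
Proof.
  intros Hf Hw t Ht; apply (continuous_ext_loc _ (fun v => opp (RInt f w v))).
  - generalize (inI_locally t Ht); apply filter_imp; intros v Hv.
    rewrite RI_RInt_I, (RInt_swap_I f w v); auto.
  - apply (@continuous_opp R_UniformSpace R_AbsRing R_NormedModule (fun v => RInt f w v)).
    apply ex_derive_continuous; eexists; apply is_derive_RInt_I; auto.
Qed.

Section Averages.
Variables f h : R -> R.
Hypotheses (Hf : contI f) (Hh : contI h) (hpos : forall x, I x -> 0 < h x).

Lemma RInt_h_pos y z : I y -> I z -> y < z -> 0 < RInt h y z.
Proof.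
  intros Hy Hz Hyz; apply RInt_gt0_I; auto.
  intros u Hu; apply hpos, (inI_between a b y z); auto; lra.
Qed.

Lemma RInt_ratio_ge k y z : I y -> I z -> y < z ->
  (forall u, y < u < z -> k <= f u / h u) -> k <= RInt f y z / RInt h y z.
Proof.
  intros Hy Hz Hyz Hk; apply Rle_div_r; [now apply RInt_h_pos |].
  rewrite <- RInt_scal_I by auto.
  apply RInt_le_I; auto; [now apply contI_scal | lra |].
  intros u Hu; apply Rle_div_r; auto.
  apply hpos, (inI_between a b y z); auto; lra.
Qed.

Lemma RInt_ratio_le k y z : I y -> I z -> y < z ->
  (forall u, y < u < z -> f u / h u <= k) -> RInt f y z / RInt h y z <= k.
Proof.
  intros Hy Hz Hyz Hk; apply Rle_div_l; [now apply RInt_h_pos |].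
  rewrite <- RInt_scal_I by auto.
  apply RInt_le_I; auto; [now apply contI_scal | lra |].
  intros u Hu; apply Rle_div_l; auto.
  apply hpos, (inI_between a b y z); auto; lra.
Qed.

Lemma RInt_ratio_band lo hi y z : I y -> I z -> y < z ->
  (forall u, y < u < z -> band lo hi (f u / h u)) -> band lo hi (RInt f y z / RInt h y z).
Proof.
  intros Hy Hz Hyz Hb; split.
  - apply RInt_ratio_ge; auto; intros u Hu; apply Hb, Hu.
  - destruct hi as [r| |]; simpl; auto.
    + apply RInt_ratio_le; auto; intros u Hu; apply Hb, Hu.
    + destruct (Hb ((y + z) / 2)) as [_ []]; lra.
Qed.

Variable L : Rbar.
Hypothesis HL : Rbar_nonneg L.

Lemma lhopital_left Phi Psi :
  lim_left a (fun u => f u / h u) L ->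
  (forall x, I x -> lim_left a (fun y => RInt h y x) p_infty) ->
  (forall y c, I y -> I c -> Phi y = Phi c + RInt f y c /\ Psi y = Psi c + RInt h y c) ->
  lim_left a (fun y => Phi y / Psi y) L.
Proof.
  intros Hfh Hdiv HPhi P HP; change (left_end a (fun y => P (Phi y / Psi y))).
  destruct (nbhd_band L P HL HP) as [lo [hi [Hband [_ Hmed]]]].
  destruct (filter_and _ _ (Hfh _ Hband) left_end_inI) as [c' [Hc' Hband']].
  destruct (Rbar_lt_fin_below a c' Hc') as [c [Hcc Hc]].
  assert (Ic : I c) by (apply Hband'; auto).
  destruct (Hmed (Phi c) (Psi c)) as [W HW].
  assert (Hbig : Rbar_nbhd p_infty (fun v => W < v)) by (exists W; auto).
  specialize (Hdiv c Ic _ Hbig); change (left_end a (fun y => W < RInt h y c)) in Hdiv.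
  generalize (filter_and _ _ left_end_inI (filter_and _ _ (left_end_lt c Hc) Hdiv)).
  apply filter_imp; intros y [Iy [Hyc HWy]].
  destruct (HPhi y c Iy Ic) as [-> ->].
  apply HW; auto; apply RInt_ratio_band; auto; intros u Hu.
  apply Hband'; [apply (Rbar_lt_fin_le a y); [apply Iy |] |]; lra.
Qed.

Lemma lhopital_right Phi Psi :
  lim_right b (fun u => f u / h u) L ->
  (forall x, I x -> lim_right b (fun z => RInt h x z) p_infty) ->
  (forall z c, I z -> I c -> Phi z = Phi c + RInt f c z /\ Psi z = Psi c + RInt h c z) ->
  lim_right b (fun z => Phi z / Psi z) L.
Proof.
  intros Hfh Hdiv HPhi P HP; change (right_end b (fun z => P (Phi z / Psi z))).
  destruct (nbhd_band L P HL HP) as [lo [hi [Hband [_ Hmed]]]].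
  destruct (filter_and _ _ (Hfh _ Hband) right_end_inI) as [c' [Hc' Hband']].
  destruct (Rbar_fin_lt_above b c' Hc') as [c [Hcc Hc]].
  assert (Ic : I c) by (apply Hband'; auto).
  destruct (Hmed (Phi c) (Psi c)) as [W HW].
  assert (Hbig : Rbar_nbhd p_infty (fun v => W < v)) by (exists W; auto).
  specialize (Hdiv c Ic _ Hbig); change (right_end b (fun z => W < RInt h c z)) in Hdiv.
  generalize (filter_and _ _ right_end_inI (filter_and _ _ (right_end_gt c Hc) Hdiv)).
  apply filter_imp; intros z [Iz [Hcz HWz]].
  destruct (HPhi z c Iz Ic) as [-> ->].
  apply HW; auto; apply RInt_ratio_band; auto; intros u Hu.
  apply Hband'; [| apply (Rbar_fin_lt_le b u z); [apply Iz |]]; lra.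
Qed.

Lemma ratio_lim_left2 G Z :
  lim_left a (fun u => f u / h u) L ->
  (forall y z, I y -> I z -> G z - G y = RInt f y z /\ Z z - Z y = RInt h y z) ->
  lim_left2 a (fun y z => (G z - G y) / (Z z - Z y)) L.
Proof.
  intros Hfh HGZ P HP.
  destruct (nbhd_band L P HL HP) as [lo [hi [Hband [HsubP _]]]].
  destruct (filter_and _ _ (Hfh _ Hband) left_end_inI) as [c [Hc Hc']].
  exists c; split; auto; intros y z Hy Hyz Hzc.
  assert (Hz : Rbar_lt a (Finite z)) by (apply (Rbar_lt_fin_le a y); auto; lra).
  destruct (Hc' y Hy ltac:(lra)) as [_ Iy]; destruct (Hc' z Hz Hzc) as [_ Iz].
  destruct (HGZ y z Iy Iz) as [-> ->]; apply HsubP, RInt_ratio_band; auto; intros u Hu.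
  apply Hc'; [apply (Rbar_lt_fin_le a y) |]; auto; lra.
Qed.

Lemma ratio_lim_right2 G Z :
  lim_right b (fun u => f u / h u) L ->
  (forall y z, I y -> I z -> G z - G y = RInt f y z /\ Z z - Z y = RInt h y z) ->
  lim_right2 b (fun y z => (G z - G y) / (Z z - Z y)) L.
Proof.
  intros Hfh HGZ P HP.
  destruct (nbhd_band L P HL HP) as [lo [hi [Hband [HsubP _]]]].
  destruct (filter_and _ _ (Hfh _ Hband) right_end_inI) as [c [Hc Hc']].
  exists c; split; auto; intros y z Hcy Hyz Hz.
  assert (Hy : Rbar_lt (Finite y) b) by (apply (Rbar_fin_lt_le b y z); auto; lra).
  destruct (Hc' y Hcy Hy) as [_ Iy]; destruct (Hc' z ltac:(lra) Hz) as [_ Iz].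
  destruct (HGZ y z Iy Iz) as [-> ->]; apply HsubP, RInt_ratio_band; auto; intros u Hu.
  apply Hc'; [| apply (Rbar_fin_lt_le b u z)]; auto; lra.
Qed.

End Averages.

Definition tail (phi : R -> R) (u : R) : R := LimR b (fun v => RI phi u v).

Section Tail.
Variable phi : R -> R.
Hypotheses (Hphi : contI phi)
  (Hlim : forall u, I u -> exists l, lim_right b (fun v => RI phi u v) (Finite l)).

Lemma tail_lim u : I u -> lim_right b (fun v => RI phi u v) (Finite (tail phi u)).
Proof.
  intros Hu; destruct (Hlim u Hu) as [l Hl].
  unfold tail; rewrite (LimR_eq _ l Hl); exact Hl.
Qed.

Lemma tail_Chasles u w : I u -> I w -> tail phi u = RInt phi u w + tail phi w.
Proof.
  intros Hu Hw; rewrite <- (Rmult_1_l (tail phi w)), Rplus_comm.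
  apply (filterlim_nbhd_unique (F := right_end b) (fun v => RI phi u v)); [now apply tail_lim |].
  apply (filterlim_nbhd_affine (fun v => RI phi w v)); [now apply tail_lim |].
  generalize right_end_inI; apply filter_imp; intros v Hv.
  rewrite !RI_RInt_I, <- (RInt_Chasles_I phi u w v); auto; ring.
Qed.

Lemma is_derive_tail t : I t -> is_derive (tail phi) t (- phi t).
Proof.
  intros Ht; apply (is_derive_ext_loc (fun u => tail phi x0 - RInt phi x0 u)).
  - generalize (inI_locally t Ht); apply filter_imp; intros u Hu.
    rewrite (tail_Chasles u x0), (RInt_swap_I phi x0 u) by auto; apply Rplus_comm.
  - apply (is_derive_ext (fun u => minus (tail phi x0) (RInt phi x0 u))); [reflexivity |].
    replace (- phi t) with (minus zero (phi t))
      by (unfold minus, zero, plus, opp; simpl; ring).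
    apply (@is_derive_minus R_AbsRing R_NormedModule (fun _ => tail phi x0)
             (fun u => RInt phi x0 u));
      [apply (@is_derive_const R_AbsRing R_NormedModule) | apply is_derive_RInt_I; auto].
Qed.

Lemma contI_tail : contI (tail phi).
Proof.
  intros t Ht; apply (@ex_derive_continuous R_AbsRing R_NormedModule).
  eexists; apply is_derive_tail, Ht.
Qed.

Lemma tail_scal k psi : (forall t, psi t = k * phi t) ->
  forall u, I u -> lim_right b (fun v => RI psi u v) (Finite (k * tail phi u)).
Proof.
  intros Hpsi u Hu; rewrite <- (Rplus_0_r (k * _)).
  apply (filterlim_nbhd_affine (F := right_end b) (fun v => RI phi u v)); [now apply tail_lim |].
  assert (Hpsi' : contI psi).
  { intros t It; apply (continuous_ext (fun t => k * phi t)); [intros; now rewrite Hpsi |].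
    now apply contI_scal. }
  generalize right_end_inI; apply filter_imp; intros v Hv.
  rewrite !RI_RInt_I, <- RInt_scal_I by auto; rewrite Rplus_0_r.
  apply RInt_ext; intros; apply Hpsi.
Qed.

Hypothesis phi_pos : forall x, I x -> 0 < phi x.

Lemma tail_pos u : I u -> 0 < tail phi u.
Proof.
  intros Hu; destruct (Rbar_fin_lt_above b u (proj2 Hu)) as [w [Huw Hw]].
  assert (Iw : I w) by (split; auto; apply (Rbar_lt_fin_le a u); [apply Hu | lra]).
  assert (Hw0 : 0 <= tail phi w).
  { apply (filterlim_nbhd_le (F := right_end b) (fun _ => 0) (fun v => RI phi w v));
      [apply filterlim_nbhd_const | now apply tail_lim |].
    generalize (filter_and _ _ right_end_inI (right_end_gt w Hw)); apply filter_imp.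
    intros v [Iv Hwv]; rewrite RI_RInt_I by auto.
    apply RInt_ge0_I; auto; [lra |].
    intros t Ht; apply Rlt_le, phi_pos, (inI_between a b w v); auto; lra. }
  rewrite (tail_Chasles u w) by auto.
  assert (0 < RInt phi u w); [| lra].
  apply RInt_gt0_I; auto; intros t Ht; apply phi_pos, (inI_between a b u w); auto; lra.
Qed.

Lemma RInt_le_tail u w : I u -> I w -> RInt phi u w <= tail phi u.
Proof. intros Hu Hw; rewrite (tail_Chasles u w) by auto; generalize (tail_pos w Hw); lra. Qed.

End Tail.

Section Diffusion.
Variables mu sigma c0 : R -> R.
Hypotheses (Hmu : forall x, I x -> continuity_pt mu x)
  (Hsigma : forall x, I x -> continuity_pt sigma x)
  (Hsigma0 : forall x, I x -> sigma x <> 0)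
  (Hc0 : forall x, I x -> continuity_pt c0 x /\ 0 <= c0 x).
Local Notation s := (sdens mu sigma x0).
Local Notation m := (mdens mu sigma x0).

Lemma sigma2_pos x : I x -> 0 < sigma x ^ 2.
Proof. intros Hx; rewrite <- Rsqr_pow2; apply Rsqr_pos_lt, Hsigma0, Hx. Qed.

Lemma contI_sigma2 : contI (fun t => sigma t ^ 2).
Proof.
  intros x Hx; apply (continuous_ext (fun t => sigma t * sigma t)); [intros; simpl; ring |].
  apply (continuous_mult sigma sigma); apply continuity_pt_filterlim, Hsigma, Hx.
Qed.

Lemma contI_drift_ratio : contI (fun t => 2 * mu t / sigma t ^ 2).
Proof.
  intros x Hx; apply (continuous_mult (fun t => 2 * mu t) (fun t => / sigma t ^ 2)).
  - apply contI_scal; auto; intros t Ht; apply continuity_pt_filterlim, Hmu, Ht.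
  - apply continuous_Rinv_comp; [now apply contI_sigma2 |].
    generalize (sigma2_pos x Hx); lra.
Qed.

Lemma sdens_pos x : 0 < s x.
Proof. apply exp_pos. Qed.

Lemma contI_sdens : contI s.
Proof.
  intros x Hx.
  apply (continuous_ext_loc _ (fun t => exp (- RInt (fun t => 2 * mu t / sigma t ^ 2) x0 t))).
  - generalize (inI_locally x Hx); apply filter_imp; intros t Ht.
    unfold sdens; rewrite RI_RInt_I; auto; apply contI_drift_ratio.
  - apply continuous_exp_comp.
    apply (@continuous_opp R_UniformSpace R_AbsRing R_NormedModule
             (fun t => RInt (fun t => 2 * mu t / sigma t ^ 2) x0 t)).
    apply (@ex_derive_continuous R_AbsRing R_NormedModule); eexists.
    apply is_derive_RInt_I; auto; apply contI_drift_ratio.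
Qed.

Lemma mdens_pos x : I x -> 0 < m x.
Proof.
  intros Hx; apply Rdiv_lt_0_compat; [lra |].
  apply Rmult_lt_0_compat; [now apply sigma2_pos | apply sdens_pos].
Qed.

Lemma contI_mdens : contI m.
Proof.
  intros x Hx; apply (continuous_ext (fun t => / (sigma t ^ 2 * s t))).
  - intros t; unfold mdens, Rdiv; now rewrite Rmult_1_l.
  - apply continuous_Rinv_comp.
    + apply (continuous_mult (fun t => sigma t ^ 2) s);
        [now apply contI_sigma2 | now apply contI_sdens].
    + generalize (sigma2_pos x Hx) (sdens_pos x); nra.
Qed.

Lemma contI_c0 : contI c0.
Proof. intros x Hx; apply continuity_pt_filterlim, Hc0, Hx. Qed.

Lemma contI_c0_mdens : contI (fun t => c0 t * m t).
Proof. apply contI_mult; [apply contI_c0 | apply contI_mdens]. Qed.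

Hypotheses (Hnata : natural_left mu sigma x0 a b) (Hnatb : natural_right mu sigma x0 a b)
  (HA1 : forall x, I x -> exists l, lim_left a (fun u => RI s u x) (Finite l))
  (HA3 : forall y, I y -> exists l, lim_right b (fun v => RI m y v) (Finite l))
  (HB : forall y, I y -> exists l, lim_right b (fun v => RI (fun t => c0 t * m t) y v) (Finite l)).

Local Notation M := (tail m).
Local Notation C := (tail (fun t => c0 t * m t)).

Lemma M_pos u : I u -> 0 < M u.
Proof. apply tail_pos; [apply contI_mdens | exact HA3 | exact mdens_pos]. Qed.

Lemma M_Chasles u w : I u -> I w -> M u = RInt m u w + M w.
Proof. apply tail_Chasles; [apply contI_mdens | exact HA3]. Qed.

Lemma C_Chasles u w : I u -> I w -> C u = RInt (fun t => c0 t * m t) u w + C w.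
Proof. apply tail_Chasles; [apply contI_c0_mdens | exact HB]. Qed.

Lemma scale_le_limit c l eta : I c -> lim_left a (fun u => RI s u c) (Finite l) -> I eta ->
  eta <= c -> RI s eta c <= l.
Proof.
  intros Ic Hl Ie Hec.
  apply (filterlim_nbhd_le (F := left_end a) (fun _ => RI s eta c) (fun y => RI s y c));
    [apply filterlim_nbhd_const | exact Hl |].
  generalize (filter_and _ _ left_end_inI (left_end_lt eta (proj1 Ie))); apply filter_imp.
  intros y [Iy Hye]; rewrite !RI_RInt_I by (auto; apply contI_sdens).
  rewrite <- (RInt_Chasles_I s y eta c) by (auto; apply contI_sdens).
  assert (0 <= RInt s y eta); [| lra].
  apply RInt_ge0_I; auto; [apply contI_sdens | lra | intros; apply Rlt_le, sdens_pos].
Qed.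

(* Σ(a) = ∫_a^c S[η,c] dM(η) is infinite while S[η,c] ≤ S(a,c] < ∞, so M(a,c] = ∞. *)
Lemma speed_diverges_left c : I c -> lim_left a (fun y => RInt m y c) p_infty.
Proof.
  intros Ic; destruct (HA1 c Ic) as [l Hl]; destruct (Hnata c Ic) as [HN _].
  apply (filterlim_pinfty_le (F := left_end a) _ _ (Rabs l + 1) HN);
    [generalize (Rabs_pos l); lra |].
  generalize (filter_and _ _ left_end_inI (left_end_lt c (proj1 Ic))); apply filter_imp.
  intros y [Iy Hyc].
  assert (HG : contI (fun eta => RI s eta c * m eta)).
  { apply contI_mult; [apply contI_RI_l; auto; apply contI_sdens | apply contI_mdens]. }
  rewrite RI_RInt_I, <- RInt_scal_I by (auto; apply contI_mdens).
  apply RInt_le_I; auto; [apply contI_scal, contI_mdens | lra |].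
  intros t Ht; assert (It : I t) by (apply (inI_between a b y c); auto; lra).
  apply Rmult_le_compat_r; [now apply Rlt_le, mdens_pos |].
  generalize (scale_le_limit c l t Ic Hl It ltac:(lra)) (Rle_abs l); lra.
Qed.

Lemma M_ge_RInt u w : I u -> I w -> RInt m u w <= M u.
Proof. apply RInt_le_tail; [apply contI_mdens | exact HA3 | exact mdens_pos]. Qed.

Lemma contI_zeta_density : contI (fun u => 2 * M u * s u).
Proof.
  apply contI_mult; [apply contI_scal, contI_tail, HA3; apply contI_mdens | apply contI_sdens].
Qed.

Lemma zeta_density_diverges_left x : I x ->
  lim_left a (fun y => RInt (fun u => 2 * M u * s u) y x) p_infty.
Proof.
  intros Ix; destruct (Hnata x Ix) as [_ HN].
  apply (filterlim_pinfty_le (F := left_end a) _ _ 1 HN); [lra |].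
  generalize (filter_and _ _ left_end_inI (left_end_lt x (proj1 Ix))); apply filter_imp.
  intros y [Iy Hyx].
  assert (Hg : contI (fun t => RI m t x * s t))
    by (apply contI_mult; [apply contI_RI_l; auto; apply contI_mdens | apply contI_sdens]).
  rewrite Rmult_1_l, RI_RInt_I by auto.
  apply RInt_le_I; auto; [apply contI_zeta_density | lra |].
  intros t Ht; assert (It : I t) by (apply (inI_between a b y x); auto; lra).
  rewrite RI_RInt_I by (auto; apply contI_mdens).
  apply Rmult_le_compat_r; [apply Rlt_le, sdens_pos |].
  generalize (M_ge_RInt t x It Ix) (M_pos t It); lra.
Qed.

(* Integration by parts: ∫_x^v S[x,t] dM(t) = ∫_x^v M[t,b) dS(t) - S[x,v] M[v,b). *)
Lemma RInt_scale_speed_le x v : I x -> I v -> x <= v ->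
  RInt (fun t => RInt s x t * m t) x v <= RInt (fun t => s t * M t) x v.
Proof.
  intros Ix Iv Hxv.
  assert (Iseg : forall t, Rmin x v <= t <= Rmax x v -> I t).
  { intros t Ht; apply (inI_between a b (Rmin x v) (Rmax x v)); auto;
      unfold Rmin, Rmax; destruct Rle_dec; auto. }
  assert (HsM : contI (fun t => s t * M t))
    by (apply contI_mult; [apply contI_sdens | apply contI_tail, HA3; apply contI_mdens]).
  set (l := RInt (fun t => s t * M t) x v).
  assert (Hibp : is_RInt (fun t => scal (RInt s x t) (opp (m t))) x v
     (minus (minus (scal (RInt s x v) (M v)) (scal (RInt s x x) (M x))) l)).
  { apply (@is_RInt_scal_derive_r R_CompleteNormedModule (fun t => RInt s x t) M s
             (fun t => opp (m t))).
    - intros t Ht; apply is_derive_RInt_I; auto; apply contI_sdens.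
    - intros t Ht; apply is_derive_tail, Iseg, Ht; [apply contI_mdens | exact HA3].
    - intros t Ht; apply contI_sdens, Iseg, Ht.
    - intros t Ht; apply (@continuous_opp R_UniformSpace R_AbsRing R_NormedModule m).
      apply contI_mdens, Iseg, Ht.
    - apply (@RInt_correct R_CompleteNormedModule (fun t => s t * M t)), ex_RInt_I; auto. }
  assert (E : RInt (fun t => RInt s x t * m t) x v
              = - RInt (fun t => scal (RInt s x t) (opp (m t))) x v).
  { rewrite <- (@RInt_opp R_CompleteNormedModule) by (eexists; exact Hibp).
    apply RInt_ext; intros t _; unfold scal, opp; simpl; unfold mult; simpl; ring. }
  rewrite E, (is_RInt_unique _ _ _ _ Hibp), (@RInt_point R_CompleteNormedModule).
  unfold minus, plus, opp, scal, mult; simpl.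
  assert (0 <= RInt s x v)
    by (apply RInt_ge0_I; auto; [apply contI_sdens | intros; apply Rlt_le, sdens_pos]).
  generalize (M_pos v Iv); intros; assert (0 <= RInt s x v * M v) by (apply Rmult_le_pos; lra).
  change (- (RInt s x v * M v + - (0 * M x) + - l) <= l); lra.
Qed.

Lemma zeta_density_diverges_right x : I x ->
  lim_right b (fun z => RInt (fun u => 2 * M u * s u) x z) p_infty.
Proof.
  intros Ix; destruct (Hnatb x Ix) as [HS _].
  apply (filterlim_pinfty_le (F := right_end b) _ _ 1 HS); [lra |].
  generalize (filter_and _ _ right_end_inI (right_end_gt x (proj2 Ix))); apply filter_imp.
  intros v [Iv Hxv].
  assert (Hg : contI (fun t => RI s x t * m t))
    by (apply contI_mult; [apply contI_RI_r; auto; apply contI_sdens | apply contI_mdens]).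
  rewrite Rmult_1_l, RI_RInt_I by auto.
  rewrite (RInt_ext _ (fun t => RInt s x t * m t)).
  2: { intros t Ht; rewrite Rmin_left, Rmax_right in Ht by lra.
       rewrite RI_RInt_I; auto; [apply contI_sdens | apply (inI_between a b x v); auto; lra]. }
  eapply Rle_trans; [apply RInt_scale_speed_le; auto; lra |].
  apply RInt_le_I; auto; [| apply contI_zeta_density | lra |].
  - apply contI_mult; [apply contI_sdens | apply contI_tail, HA3; apply contI_mdens].
  - intros t Ht; assert (It : I t) by (apply (inI_between a b x v); auto; lra).
    generalize (sdens_pos t) (M_pos t It); nra.
Qed.

Variables ca cb : Rbar.
Hypotheses (Hca : lim_left a c0 ca) (Hcb : lim_right b c0 cb)
  (Hca_nn : Rbar_nonneg ca) (Hcb_nn : Rbar_nonneg cb).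

Lemma tail_ratio_lim_left : lim_left a (fun u => C u / M u) ca.
Proof.
  apply (lhopital_left _ _ contI_c0_mdens contI_mdens mdens_pos ca Hca_nn).
  - apply (filterlim_ext_loc (F := left_end a) c0); [| exact Hca].
    generalize left_end_inI; apply filter_imp; intros u Iu.
    field; apply Rgt_not_eq, mdens_pos, Iu.
  - exact speed_diverges_left.
  - intros y c Iy Ic; split; rewrite Rplus_comm; [apply C_Chasles | apply M_Chasles]; auto.
Qed.

(* C(u)/M(u) is an m-weighted average of c0 over (u, b). *)
Lemma tail_ratio_lim_right : lim_right b (fun u => C u / M u) cb.
Proof.
  intros P HP; change (right_end b (fun u => P (C u / M u))).
  destruct (nbhd_band cb P Hcb_nn HP) as [lo [hi [Hband [HsubP _]]]].
  destruct (filter_and _ _ (Hcb _ Hband) right_end_inI) as [d [Hd Hd']].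
  exists d; split; auto; intros u Hdu Hu.
  destruct (Hd' u Hdu Hu) as [_ Iu]; apply HsubP.
  apply (filterlim_nbhd_band (F := right_end b)
           (fun v => RI (fun t => c0 t * m t) u v / RI m u v)).
  - apply filterlim_nbhd_div; [apply tail_lim | apply tail_lim | apply Rgt_not_eq, M_pos];
      auto using contI_c0_mdens, contI_mdens.
  - generalize (filter_and _ _ right_end_inI (right_end_gt u Hu)); apply filter_imp.
    intros v [Iv Huv]; rewrite !RI_RInt_I by auto using contI_c0_mdens, contI_mdens.
    apply RInt_ratio_band; auto using contI_c0_mdens, contI_mdens, mdens_pos.
    intros t Ht; replace (c0 t * m t / m t) with (c0 t).
    + apply Hd'; [lra | apply (Rbar_fin_lt_le b t v); [apply Iv | lra]].
    + field; apply Rgt_not_eq, mdens_pos, (inI_between a b u v); auto; lra.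
Qed.

Local Notation g := (g0 mu sigma x0 b c0).
Local Notation zt := (zeta mu sigma x0 b).
Local Notation f := (fun u => tail (fun t => 2 * c0 t * m t) u * s u).
Local Notation h := (fun u => 2 * M u * s u).

Lemma lim_RI_2c0m u : I u ->
  lim_right b (fun v => RI (fun t => 2 * c0 t * m t) u v) (Finite (2 * C u)).
Proof. apply tail_scal; [apply contI_c0_mdens | exact HB | intros; ring]. Qed.

Lemma contI_g0_density : contI f.
Proof.
  apply contI_mult; [| apply contI_sdens].
  apply contI_tail; [| intros u Iu; eexists; now apply lim_RI_2c0m].
  intros x Ix; apply (continuous_ext (fun t => 2 * (c0 t * m t)));
    [intros; symmetry; apply Rmult_assoc |].
  apply contI_scal; [apply contI_c0_mdens | exact Ix].
Qed.

Lemma zeta_density_pos x : I x -> 0 < h x.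
Proof. intros Ix; generalize (M_pos x Ix) (sdens_pos x); nra. Qed.

Lemma density_ratio u : I u -> f u / h u = C u / M u.
Proof.
  intros Iu; unfold tail at 1; rewrite (LimR_eq _ _ (lim_RI_2c0m u Iu)).
  generalize (M_pos u Iu) (sdens_pos u); intros; field; lra.
Qed.

Lemma density_ratio_lim_left : lim_left a (fun u => f u / h u) ca.
Proof.
  apply (filterlim_ext_loc (F := left_end a) (fun u => C u / M u)); [| exact tail_ratio_lim_left].
  generalize left_end_inI; apply filter_imp; intros u Iu; symmetry; now apply density_ratio.
Qed.

Lemma density_ratio_lim_right : lim_right b (fun u => f u / h u) cb.
Proof.
  apply (filterlim_ext_loc (F := right_end b) (fun u => C u / M u)); [| exact tail_ratio_lim_right].
  generalize right_end_inI; apply filter_imp; intros u Iu; symmetry; now apply density_ratio.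
Qed.

Lemma g0_zeta_increments y z : I y -> I z -> g z - g y = RInt f y z /\ zt z - zt y = RInt h y z.
Proof.
  intros Iy Iz; unfold g0, zeta, tail.
  rewrite !RI_RInt_I by auto using contI_g0_density, contI_zeta_density.
  split; rewrite <- (RInt_Chasles_I _ x0 y z) by auto using contI_g0_density, contI_zeta_density;
    ring.
Qed.

Lemma g0_zeta_x0 : g x0 = 0 /\ zt x0 = 0.
Proof.
  unfold g0, zeta; rewrite !RI_RInt_I by auto using contI_g0_density, contI_zeta_density.
  split; apply (@RInt_point R_CompleteNormedModule).
Qed.

Lemma g0_zeta_ratio_lim_left z : I z -> lim_left a (fun y => (g z - g y) / (zt z - zt y)) ca.
Proof.
  intros Iz.
  apply (lhopital_left _ _ contI_g0_density contI_zeta_density zeta_density_pos ca Hca_nn);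
    [exact density_ratio_lim_left | exact zeta_density_diverges_left |].
  intros y c Iy Ic; destruct (g0_zeta_increments y c Iy Ic) as [Eg Ez]; split; lra.
Qed.

Lemma g0_zeta_ratio_lim_right y : I y -> lim_right b (fun z => (g z - g y) / (zt z - zt y)) cb.
Proof.
  intros Iy.
  apply (lhopital_right _ _ contI_g0_density contI_zeta_density zeta_density_pos cb Hcb_nn);
    [exact density_ratio_lim_right | exact zeta_density_diverges_right |].
  intros z c Iz Ic; destruct (g0_zeta_increments c z Ic Iz) as [Eg Ez]; split; lra.
Qed.

Lemma g0_div_zeta_lim_left : lim_left a (fun y => g y / zt y) ca.
Proof.
  apply (filterlim_ext (F := left_end a) (fun y => (g x0 - g y) / (zt x0 - zt y)));
    [| exact (g0_zeta_ratio_lim_left x0 Hx0)].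
  intros y; destruct g0_zeta_x0 as [-> ->]; unfold Rdiv; rewrite !Rminus_0_l, Rinv_opp; ring.
Qed.

Lemma g0_div_zeta_lim_right : lim_right b (fun z => g z / zt z) cb.
Proof.
  apply (filterlim_ext (F := right_end b) (fun z => (g z - g x0) / (zt z - zt x0)));
    [| exact (g0_zeta_ratio_lim_right x0 Hx0)].
  intros z; destruct g0_zeta_x0 as [-> ->]; unfold Rdiv; rewrite !Rminus_0_r; ring.
Qed.

Lemma g0_lim_left : Rbar_pos ca -> lim_left a g m_infty.
Proof.
  intros Hpos; apply (filterlim_m_infty_opp (F := left_end a)).
  apply (filterlim_pinfty_ratio (F := left_end a) _ (fun y => - zt y) ca Hpos).
  - apply (filterlim_ext (F := left_end a) (fun y => g y / zt y)); [| exact g0_div_zeta_lim_left].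
    intros y; unfold Rdiv; rewrite Rinv_opp; ring.
  - apply (filterlim_ext_loc (F := left_end a) (fun y => RInt h y x0));
      [| exact (zeta_density_diverges_left x0 Hx0)].
    generalize left_end_inI; apply filter_imp; intros y Iy.
    destruct (g0_zeta_increments y x0 Iy Hx0) as [_ Ez]; destruct g0_zeta_x0 as [_ E0]; lra.
Qed.

Lemma g0_lim_right : Rbar_pos cb -> lim_right b g p_infty.
Proof.
  intros Hpos; apply (filterlim_pinfty_ratio (F := right_end b) _ zt cb Hpos);
    [exact g0_div_zeta_lim_right |].
  apply (filterlim_ext_loc (F := right_end b) (fun z => RInt h x0 z));
    [| exact (zeta_density_diverges_right x0 Hx0)].
  generalize right_end_inI; apply filter_imp; intros z Iz.
  destruct (g0_zeta_increments x0 z Hx0 Iz) as [_ Ez]; destruct g0_zeta_x0 as [_ E0]; lra.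
Qed.

Lemma diffusion_ratio_limits :
  (forall z, I z -> lim_left a (fun y => (g z - g y) / (zt z - zt y)) ca) /\
  (forall y, I y -> lim_right b (fun z => (g z - g y) / (zt z - zt y)) cb) /\
  lim_left2 a (fun y z => (g z - g y) / (zt z - zt y)) ca /\
  lim_right2 b (fun y z => (g z - g y) / (zt z - zt y)) cb /\
  lim_left a (fun y => g y / zt y) ca /\
  lim_right b (fun z => g z / zt z) cb /\
  (Rbar_pos ca -> lim_left a g m_infty) /\
  (Rbar_pos cb -> lim_right b g p_infty).
Proof.
  repeat split; auto using g0_zeta_ratio_lim_left, g0_zeta_ratio_lim_right, g0_div_zeta_lim_left,
    g0_div_zeta_lim_right, g0_lim_left, g0_lim_right.
  - apply (ratio_lim_left2 _ _ contI_g0_density contI_zeta_density zeta_density_pos ca Hca_nn);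
      [exact density_ratio_lim_left | exact g0_zeta_increments].
  - apply (ratio_lim_right2 _ _ contI_g0_density contI_zeta_density zeta_density_pos cb Hcb_nn);
      [exact density_ratio_lim_right | exact g0_zeta_increments].
Qed.

End Diffusion.
End Interval.

Theorem lemma2p3 (a b : Rbar) (mu sigma c0 : R -> R) (x0 : R) (ca cb : Rbar)
  (* setting *)
  (Hab : Rbar_lt a b)
  (Hx0 : inI a b x0)
  (Hmu : forall x, inI a b x -> continuity_pt mu x)
  (Hsigma : forall x, inI a b x -> continuity_pt sigma x)
  (Hsigma0 : forall x, inI a b x -> sigma x <> 0)
  (* a and b are natural boundaries *)
  (Hnata : natural_left mu sigma x0 a b)
  (Hnatb : natural_right mu sigma x0 a b)
  (* Condition A *)
  (HA1 : forall x, inI a b x ->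
     exists L, lim_left a (fun u => RI (sdens mu sigma x0) u x) (Finite L))
  (HA2 : forall x, inI a b x ->
     lim_right b (fun v => RI (sdens mu sigma x0) x v) p_infty)
  (HA3 : forall y, inI a b y ->
     exists L, lim_right b (fun v => RI (mdens mu sigma x0) y v) (Finite L))
  (* Condition B(a) *)
  (Hc0 : forall x, inI a b x -> continuity_pt c0 x /\ 0 <= c0 x)
  (Hca : lim_left a c0 ca)
  (Hcb : lim_right b c0 cb)
  (Hca_nn : Rbar_nonneg ca)
  (Hcb_nn : Rbar_nonneg cb)
  (Hca_inf : a = m_infty -> ca = p_infty)
  (Hcb_inf : b = p_infty -> cb = p_infty)
  (HB : forall y, inI a b y ->
     exists L, lim_right b
       (fun v => RI (fun t => c0 t * mdens mu sigma x0 t) y v) (Finite L)) :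
  let g := g0 mu sigma x0 b c0 in
  let zt := zeta mu sigma x0 b in
  (forall z, inI a b z ->
     lim_left a (fun y => (g z - g y) / (zt z - zt y)) ca) /\
  (forall y, inI a b y ->
     lim_right b (fun z => (g z - g y) / (zt z - zt y)) cb) /\
  lim_left2 a (fun y z => (g z - g y) / (zt z - zt y)) ca /\
  lim_right2 b (fun y z => (g z - g y) / (zt z - zt y)) cb /\
  lim_left a (fun y => g y / zt y) ca /\
  lim_right b (fun z => g z / zt z) cb /\
  (Rbar_pos ca -> lim_left a g m_infty) /\
  (Rbar_pos cb -> lim_right b g p_infty).
Proof.
  intros g zt.
  exact (diffusion_ratio_limits a b x0 Hx0 mu sigma c0 Hmu Hsigma Hsigma0 Hc0 Hnata Hnatb
           HA1 HA3 HB ca cb Hca Hcb Hca_nn Hcb_nn).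
Qed.
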